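(* Let $G=(V,E)$ be a finite simple graph with $V=\{1,\dots,n\}$ and real vertex weights $w_1,\dots,w_n$, and let $d\ge 1$. Suppose $\psi, v_1,\dots,v_n\in\mathbb{C}^d$ are complex unit vectors with $\langle v_i|v_j\rangle=0$ whenever $\{i,j\}\in E$, forming a Lovász-optimum orthogonal representation, i.e. $\sum_{j\in V} w_j|\langle\psi|v_j\rangle|^2=\vartheta_c(G)$. Then there exist real unit vectors $\phi,\omega_1,\dots,\omega_n\in\mathbb{R}^{2d-1}$ with $\langle \omega_i|\omega_j\rangle=0$ whenever $\{i,j\}\in E$ and $$\sum_{j\in V} w_j\,\langle \phi|\omega_j\rangle^2=\sum_{j\in V} w_j\,|\langle \psi|v_j\rangle|^2 = \vartheta_c(G);$$ that is, a Lovász-optimum orthogonal representation can be realized in the $(2d-1)$-dimensional real Hilbert space.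
   Context: For the weighted graph $G$, $\vartheta_c(G)=\sup \sum_{j\in V} w_j\,|\langle \psi|v_j\rangle|^2$, where the supremum runs over all dimensions $m\ge1$ and all complex unit vectors $\psi,v_1,\dots,v_n\in\mathbb{C}^m$ such that $\langle v_i|v_j\rangle=0$ whenever $\{i,j\}\in E$. A Lovász-optimum orthogonal representation (LOOR) is a choice of unit vectors $\psi, v_1,\dots,v_n$ (real or complex) satisfying these orthogonality constraints and attaining this supremum. *)

From HB Require Import structures.
From mathcomp Require Import all_boot all_order all_algebra.
From mathcomp Require Import complex.
From mathcomp Require Import boolp classical_sets reals.
Set Implicit Arguments. Unset Strict Implicit. Unset Printing Implicit Defensive.
Import Order.TTheory GRing.Theory Num.Theory.
Local Open Scope ring_scope.

Definition cinner (R : realType) (m : nat) (u v : 'I_m -> R[i]) : R[i] :=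
  \sum_(k < m) (complex.conjc (u k)) * v k.

Definition csqnorm (R : realType) (z : R[i]) : R :=
  (complex.Re z) ^+ 2 + (complex.Im z) ^+ 2.

Definition rinner (R : realType) (m : nat) (u v : 'I_m -> R) : R :=
  \sum_(k < m) u k * v k.

Definition cvalue (R : realType) (n m : nat) (w : 'I_n -> R)
  (psi : 'I_m -> R[i]) (v : 'I_n -> 'I_m -> R[i]) : R :=
  \sum_(j < n) w j * csqnorm (cinner psi (v j)).

Definition is_cOR (R : realType) (n m : nat) (e : rel 'I_n)
  (psi : 'I_m -> R[i]) (v : 'I_n -> 'I_m -> R[i]) : Prop :=
  cinner psi psi = 1 /\ (forall j, cinner (v j) (v j) = 1) /\
  (forall i j, e i j -> cinner (v i) (v j) = 0).

Local Open Scope classical_set_scope.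
Definition theta_c (R : realType) (n : nat) (e : rel 'I_n) (w : 'I_n -> R) : R :=
  reals.sup [set x : R | exists (m : nat) (psi : 'I_m -> R[i])
                           (v : 'I_n -> 'I_m -> R[i]),
      (0 < m)%N /\ is_cOR e psi v /\ x = cvalue w psi v].

From HB Require Import structures.
From mathcomp Require Import all_boot all_order all_algebra.
From mathcomp Require Import complex.
From mathcomp Require Import boolp classical_sets reals.
From mathcomp Require Import ring.
Import Order.TTheory GRing.Theory Num.Theory.
Local Open Scope ring_scope.
Set Implicit Arguments. Unset Strict Implicit.

(* Multiplying each v_j by a unimodular phase makes <psi|v_j> real and
   nonnegative without changing any orthogonality or any |<psi|v_j>|.
   Identifying C^d with R^(2d) through real and imaginary parts turns
   Re <x|y> into the Euclidean inner product, and then psi and all rotated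
   v_j are real-orthogonal to the unit vector i psi, because
   Re <i psi|psi> = 0 and Re <i psi|v_j> = Im <psi|v_j> = 0.  A Householder
   reflection sending i psi to the last basis vector maps its orthogonal
   complement isometrically onto R^(2d-1). *)

Local Notation Re := complex.Re.
Local Notation Im := complex.Im.

Section ComplexScalars.
Variable R : realType.
Implicit Types x y z : R[i].

Lemma Re_conjcM x y : Re (x^*%C * y) = Re x * Re y + Im x * Im y.
Proof. by case: x => a b; case: y => c d /=; ring. Qed.

Lemma Re_sum m (F : 'I_m -> R[i]) : Re (\sum_(k < m) F k) = \sum_(k < m) Re (F k).
Proof. exact: (raddf_sum (@Re R : Rcomplex R -> R)). Qed.

Lemma mul_conjc_i : 'i^*%C * 'i%C = 1 :> R[i].
Proof. by simpc. Qed.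

Lemma Re_conjc_iM x : Re ('i^*%C * x) = Im x.
Proof. by rewrite Re_conjcM /=; ring. Qed.

Definition phase z : R[i] := if z == 0 then 1 else z^*%C / `|z|.

Lemma mul_phase z : phase z * z = `|z|.
Proof.
rewrite /phase; case: eqP => [->|/eqP z0]; first by rewrite mulr0 normr0.
by rewrite mulrAC [z^*%C * z]mulrC -sqr_normc expr2 mulfK ?normr_eq0.
Qed.

Lemma mul_conjc_phase z : (phase z)^*%C * phase z = 1.
Proof.
rewrite /phase; case: eqP => [_|/eqP z0]; first by rewrite conjc1 mulr1.
have nz : `|z| != 0 by rewrite normr_eq0.
have Jnorm : (`|z|)^*%C = `|z| by rewrite normc_def conjc_real.
rewrite (conjc_is_multiplicative R).1 conjcK conjc_inv Jnorm mulrACA -sqr_normc -expr2 exprVn.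
by rewrite mulfV // expf_neq0.
Qed.

Lemma Im_normc z : Im `|z| = 0.
Proof. by rewrite normc_def. Qed.

Lemma Re_normc_sqr z : Re `|z| ^+ 2 = csqnorm z.
Proof. by rewrite normc_def /= sqr_sqrtr // addr_ge0 ?sqr_ge0. Qed.

End ComplexScalars.

Section ComplexVectors.
Variables (R : realType) (m : nat).
Implicit Types (c : R[i]) (u v : 'I_m -> R[i]).

Definition scalev c u : 'I_m -> R[i] := fun k => c * u k.

Lemma cinnerZl c u v : cinner (scalev c u) v = c^*%C * cinner u v.
Proof.
rewrite /cinner mulr_sumr; apply: eq_bigr => k _.
by rewrite /scalev (conjc_is_multiplicative R).1 mulrA.
Qed.

Lemma cinnerZr c u v : cinner u (scalev c v) = c * cinner u v.
Proof. by rewrite /cinner mulr_sumr; apply: eq_bigr => k _; rewrite /scalev mulrCA. Qed.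

Definition realify u : 'I_(m + m) -> R :=
  fun k => match split k with inl k => Re (u k) | inr k => Im (u k) end.

Lemma rinner_realify u v : rinner (realify u) (realify v) = Re (cinner u v).
Proof.
rewrite /rinner big_split_ord /= /cinner Re_sum -big_split /=.
apply: eq_bigr => k _.
by rewrite /realify (unsplitK (inl k)) (unsplitK (inr k)) Re_conjcM.
Qed.

End ComplexVectors.

Section RealInner.
Variables (R : realType) (m : nat).
Implicit Types (a x y z : 'I_m -> R).

Lemma rinnerC x y : rinner x y = rinner y x.
Proof. by apply: eq_bigr => k _; rewrite mulrC. Qed.

Lemma rinnerBl x y z : rinner (fun k => x k - y k) z = rinner x z - rinner y z.
Proof. by rewrite /rinner -sumrB; apply: eq_bigr => k _; rewrite mulrBl. Qed.

Lemma rinnerZl (s : R) x y : rinner (fun k => s * x k) y = s * rinner x y.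
Proof. by rewrite /rinner mulr_sumr; apply: eq_bigr => k _; rewrite mulrA. Qed.

Lemma rinnerBr x y z : rinner x (fun k => y k - z k) = rinner x y - rinner x z.
Proof. by rewrite rinnerC rinnerBl !(rinnerC x). Qed.

Lemma rinnerZr (s : R) x y : rinner x (fun k => s * y k) = s * rinner x y.
Proof. by rewrite rinnerC rinnerZl rinnerC. Qed.

Lemma rinner_self_eq0 a : rinner a a = 0 -> forall k, a k = 0.
Proof.
move=> /eqP; rewrite psumr_eq0 => [/allP a0 k|k _]; last by rewrite -expr2 sqr_ge0.
by have := a0 k (mem_index_enum k); rewrite mulf_eq0 orbb => /eqP.
Qed.

End RealInner.

Section Compression.
Variables (R : realType) (M : nat).
Implicit Types (a u x y : 'I_M.+1 -> R).

(* For [a = 0] the junk value [_ / 0 = 0] makes this the identity. *)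
Definition reflection a x : 'I_M.+1 -> R :=
  fun k => x k - (2 * rinner a x / rinner a a) * a k.

Lemma rinner_reflection a x y :
  rinner (reflection a x) (reflection a y) = rinner x y.
Proof.
rewrite /reflection rinnerBl !rinnerBr !rinnerZl !rinnerZr (rinnerC a x).
have [->|aa_neq0] := eqVneq (rinner a a) 0; first by rewrite invr0 !mulr0 !mul0r; ring.
by field.
Qed.

Definition unit_last : 'I_M.+1 -> R := fun k => (k == ord_max)%:R.

Lemma rinner_unit_last x : rinner unit_last x = x ord_max.
Proof.
rewrite /rinner (bigD1 ord_max) //= {1}/unit_last eqxx mul1r big1 ?addr0 // => k /negPf k_neq.
by rewrite /unit_last k_neq mul0r.
Qed.

Lemma reflection_last u x : rinner u u = 1 -> rinner u x = 0 ->
  reflection (fun k => u k - unit_last k) x ord_max = 0.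
Proof.
move=> uu1 ux0; set a := fun k => _.
have ax : rinner a x = - x ord_max by rewrite rinnerBl ux0 rinner_unit_last sub0r.
have aa : rinner a a = 2 - 2 * u ord_max.
  rewrite rinnerBl !rinnerBr uu1 (rinnerC u unit_last) !rinner_unit_last.
  by rewrite /unit_last eqxx /=; ring.
rewrite /reflection ax.
have [aa0|aa_neq0] := eqVneq (rinner a a) 0.
  have x0 : x ord_max = 0.
    rewrite -[x ord_max]opprK -ax /rinner big1 ?oppr0 // => k _.
    by rewrite (rinner_self_eq0 aa0) mul0r.
  by rewrite x0 oppr0 !mulr0 !mul0r subr0.
by move: aa_neq0; rewrite aa /a /unit_last eqxx /= => aa_neq0; field.
Qed.

Definition drop_last x : 'I_M -> R := fun k => x (widen_ord (leqnSn M) k).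

Lemma rinner_drop_last x y : x ord_max = 0 ->
  rinner (drop_last x) (drop_last y) = rinner x y.
Proof. by move=> x0; rewrite [RHS]/rinner big_ord_recr /= x0 mul0r addr0. Qed.

Definition compress u x : 'I_M -> R :=
  drop_last (reflection (fun k => u k - unit_last k) x).

Lemma rinner_compress u x y : rinner u u = 1 -> rinner u x = 0 ->
  rinner (compress u x) (compress u y) = rinner x y.
Proof. by move=> uu1 ux0; rewrite rinner_drop_last ?reflection_last ?rinner_reflection. Qed.

End Compression.

Lemma real_representation (R : realType) n (e : rel 'I_n) (w : 'I_n -> R) d
    (psi : 'I_d.+1 -> R[i]) (v : 'I_n -> 'I_d.+1 -> R[i]) :
  is_cOR e psi v ->
  exists (phi : 'I_(d + d.+1) -> R) (om : 'I_n -> 'I_(d + d.+1) -> R),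
    rinner phi phi = 1 /\ (forall j, rinner (om j) (om j) = 1) /\
    (forall i j, e i j -> rinner (om i) (om j) = 0) /\
    \sum_(j < n) w j * (rinner phi (om j)) ^+ 2 = cvalue w psi v.
Proof.
move=> [psi1 [v1 ve0]].
pose v' j := scalev (phase (cinner psi (v j))) (v j).
pose u : 'I_(d + d.+1).+1 -> R := realify (scalev 'i psi).
(* The ascription puts realified vectors in the shape ['I_M.+1] expected by
   [compress]; [d.+1 + d.+1] is only convertible to it. *)
have realifyE (x y : 'I_d.+1 -> R[i]) :
  rinner (realify x : 'I_(d + d.+1).+1 -> R) (realify y) = Re (cinner x y)
  := rinner_realify x y.
have uu1 : rinner u u = 1 by rewrite realifyE cinnerZl cinnerZr psi1 mulr1 mul_conjc_i.
have u_psi : rinner u (realify psi) = 0 by rewrite realifyE cinnerZl psi1 mulr1.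
have u_v' j : rinner u (realify (v' j)) = 0.
  by rewrite realifyE cinnerZl cinnerZr mul_phase Re_conjc_iM Im_normc.
have compressE (x y : 'I_d.+1 -> R[i]) : rinner u (realify x) = 0 ->
    rinner (compress u (realify x)) (compress u (realify y)) = Re (cinner x y).
  by move=> ux0; rewrite rinner_compress // realifyE.
exists (compress u (realify psi)), (fun j => compress u (realify (v' j))).
split; first by rewrite compressE // psi1.
split=> [j|]; first by rewrite compressE // cinnerZl cinnerZr v1 mulr1 mul_conjc_phase.
split=> [i j eij|]; first by rewrite compressE // cinnerZl cinnerZr ve0 // !mulr0.
by apply: eq_bigr => j _; rewrite compressE // cinnerZr mul_phase Re_normc_sqr.
Qed.

Theorem mainTheorem2 (R : realType) (n : nat) (e : rel 'I_n)
  (e_sym : symmetric e) (e_irr : irreflexive e) (w : 'I_n -> R) (d : nat)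
  (d_pos : (0 < d)%N) (psi : 'I_d -> R[i]) (v : 'I_n -> 'I_d -> R[i])
  (hOR : is_cOR e psi v) (hopt : cvalue w psi v = theta_c e w) :
  exists (phi : 'I_(2 * d - 1) -> R) (om : 'I_n -> 'I_(2 * d - 1) -> R),
    rinner phi phi = 1 /\ (forall j, rinner (om j) (om j) = 1) /\
    (forall i j, e i j -> rinner (om i) (om j) = 0) /\
    \sum_(j < n) w j * (rinner phi (om j)) ^+ 2 = cvalue w psi v /\
    cvalue w psi v = theta_c e w.
Proof.
case: d d_pos psi v hOR hopt => [//|d] _ psi v hOR hopt.
have -> : (2 * d.+1 - 1 = d + d.+1)%N by rewrite mul2n -addnn addSn subn1 addnS.
have [phi [om [phi1 [om1 [om_e value]]]]] := real_representation w hOR.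
by exists phi, om.
Qed.
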